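(* Let $X$ be a continuum, let $n\geq2$ be an integer, and let $f:X\to X$ be a map. Consider the statements: (1) $f$ is $\triangle$-mixing; (2) $F_n(f)$ is $\triangle$-mixing; (3) $SF_n(f)$ is $\triangle$-mixing. Then (2) implies (1), and (2) implies (3).
   Context: A continuum is a nonempty compact connected metric space. $F_n(X)$ is the set of nonempty subsets of $X$ with at most $n$ points, with the Hausdorff metric topology; $F_1(X)=\{\{x\}:x\in X\}$; $F_n(f)(A)=f(A)$. $SF_n(X)=F_n(X)/F_1(X)$ is the quotient collapsing $F_1(X)$ to a point, $q$ the quotient map, $F_X=q(F_1(X))$, and $SF_n(f)(\chi)=q(F_n(f)(q^{-1}(\chi)))$ for $\chi\neq F_X$, $SF_n(f)(F_X)=F_X$. A map $g:Z\to Z$ is $\triangle$-mixing if for every $m\in\mathbb{N}$ and every infinite set $B\subseteq\mathbb{Z}_+$ there is a dense subset $Y\subseteq Z$ such that for each $y\in Y$ the set $\{(g^k(y),g^{2k}(y),\dots,g^{mk}(y)):k\in B\}$ is dense in $Z^m$. *)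

From HB Require Import structures.
From mathcomp Require Import all_boot all_order all_algebra finmap generic_quotient.
From mathcomp Require Import all_classical all_reals all_analysis.

Set Implicit Arguments.
Unset Strict Implicit.
Unset Printing Implicit Defensive.

Import Order.TTheory GRing.Theory Num.Theory.

Local Open Scope classical_set_scope.
Local Open Scope ring_scope.

(* Z^m is the product space {ptws 'I_m -> Z}; the tuple                 *)
(* (g^k y, g^{2k} y, ..., g^{mk} y) is  fun i : 'I_m => g^{(i+1)k} y.    *)
Definition tri_mixing (Z : topologicalType) (g : Z -> Z) : Prop :=
  forall (m : nat), (0 < m)%N ->
  forall (B : set nat), infinite_set B ->
  exists Y : set Z, dense Y /\
    forall y, Y y ->
      @dense {ptws 'I_m -> Z}
        [set (fun i : 'I_m => iter ((i.+1) * k)%N g y) | k in B].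

Definition continuum (R : realType) (X : metricType R) : Prop :=
  [set: X] !=set0 /\ compact [set: X] /\ connected [set: X].

Section Hyperspace.
Context {R : realType} (X : metricType R) (n : nat).

Local Open Scope fset_scope.

Definition fnP (A : {fset X}) : bool := (0 < #|` A|)%N && (#|` A| <= n)%N.

Record Fn := MkFn { fn_set :> {fset X}; fn_setP : fnP fn_set }.

HB.instance Definition _ := [isSub for fn_set].
HB.instance Definition _ := [Choice of Fn by <:].

Local Notation d := (@mdist R X).

(* For finite nonempty sets, the Hausdorff
   distance max(max_a min_b d(a,b), max_b min_a d(a,b)) is < e iff every
   point of A is e-close to some point of B and vice versa. *)
Definition hball (A : Fn) (e : R) (B : Fn) : Prop :=
  (forall a, a \in fn_set A -> exists2 b, b \in fn_set B & d a b < e) /\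
  (forall b, b \in fn_set B -> exists2 a, a \in fn_set A & d a b < e).

Let hball_center (A : Fn) (e : R) : 0 < e -> hball A e A.
Proof.
by move=> e0; split=> x xA; exists x => //; rewrite mdistxx.
Qed.

Let hball_sym (A B : Fn) (e : R) : hball A e B -> hball B e A.
Proof.
move=> [h1 h2]; split=> x xB.
  by have [a aA] := h2 x xB; exists a => //; rewrite metric_sym.
by have [b bB] := h1 x xB; exists b => //; rewrite metric_sym.
Qed.

Let hball_triangle (A B C : Fn) (e1 e2 : R) :
  hball A e1 B -> hball B e2 C -> hball A (e1 + e2) C.
Proof.
move=> [h1 h2] [k1 k2]; split=> x xP.
  have [b bB hb] := h1 x xP; have [c cC hc] := k1 b bB.
  exists c => //; apply: le_lt_trans (@metric_triangle _ _ _ b _) _.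
  by rewrite ltrD.
have [b bB hb] := k2 x xP; have [a aA ha] := h2 b bB.
exists a => //; apply: le_lt_trans (@metric_triangle _ _ _ b _) _.
by rewrite ltrD.
Qed.

HB.instance Definition _ := hasNbhs.Build Fn (nbhs_ (entourage_ hball)).
HB.instance Definition _ := @Nbhs_isPseudoMetric.Build R Fn
  (entourage_ hball) erefl hball hball_center hball_sym hball_triangle erefl.

Lemma Fn_map_subproof (f : X -> X) (A : Fn) : fnP [fset f x | x in fn_set A].
Proof.
case: A => A /andP[A0 An] /=; apply/andP; split.
  rewrite cardfs_gt0; move: A0; rewrite cardfs_gt0 => /fset0Pn[x xA].
  by apply/fset0Pn; exists (f x); apply/imfsetP; exists x.
apply: leq_trans An; apply: leq_trans (leq_imfset_card _ _ _) _.
by [].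
Qed.

Definition Fn_map (f : X -> X) (A : Fn) : Fn := MkFn (Fn_map_subproof f A).

(* The symmetric product SF_n(X) = F_n(X) / F_1(X): collapse the
   singletons (the copy of F_1(X)) to one point. *)
Definition sfrel (A B : Fn) : bool :=
  (A == B) || ((#|` fn_set A| == 1)%N && (#|` fn_set B| == 1)%N).

Lemma sfrel_refl : reflexive sfrel.
Proof. by move=> A; rewrite /sfrel eqxx. Qed.

Lemma sfrel_sym : symmetric sfrel.
Proof. by move=> A B; rewrite /sfrel eq_sym andbC. Qed.

Lemma sfrel_trans : transitive sfrel.
Proof.
move=> B A C; rewrite /sfrel.
case/orP=> [/eqP -> //|/andP[hA hB]].
case/orP=> [/eqP <-|/andP[_ hC]]; first by rewrite hA hB orbT.
by rewrite hA hC orbT.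
Qed.

Canonical sfrel_equiv := EquivRel sfrel sfrel_refl sfrel_sym sfrel_trans.

End Hyperspace.

Arguments Fn_map {R X} n f A.

Local Open Scope quotient_scope.

Notation SF X n := (quotient_topology {eq_quot (@sfrel _ X n)}).

(* SF_n(f)(chi) = q(F_n(f)(q^{-1}(chi))) for chi <> F_X, and F_X |-> F_X.
   Written uniformly through a representative of chi: when chi = F_X the
   representative is a singleton {x}, whose image {f x} is again collapsed
   to F_X; otherwise q^{-1}(chi) is the single set repr chi. *)
Definition SF_map {R : realType} {X : metricType R} (n : nat) (f : X -> X)
  (chi : SF X n) : SF X n :=
  \pi_(SF X n) (Fn_map n f (repr chi)).
Arguments SF_map {R X} n f chi.

From HB Require Import structures.
From mathcomp Require Import all_boot all_order all_algebra finmap generic_quotient.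
From mathcomp Require Import all_classical all_reals all_analysis.

(* If a lies in A, then f^j(a) lies in F_n(f)^j(A).  A neighbourhood of a
   tuple (x_i) in X^m contains a box of neighbourhoods V_i, and the box of
   Vietoris sets <V_i> = {D | D is contained in V_i} is a neighbourhood of the
   tuple of singletons ({x_i}) in F_n(X)^m; a tuple of points selected from a
   tuple in that box lies in the original neighbourhood.  So selecting points
   from a dense set of tuples in F_n(X)^m gives a dense set of tuples in X^m,
   and triangle-mixing descends from F_n(f) to f.  For SF_n(f), the quotient
   map is a continuous surjection semiconjugating F_n(f) to SF_n(f), and
   triangle-mixing passes to such factors. *)

Set Implicit Arguments.
Unset Strict Implicit.
Unset Printing Implicit Defensive.

Import Order.TTheory GRing.Theory Num.Theory.

Local Open Scope classical_set_scope.
Local Open Scope ring_scope.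

Section dense.
Context {T : topologicalType}.
Implicit Types S W : set T.

Lemma denseS S S' : S `<=` S' -> dense S -> dense S'.
Proof.
move=> SS' dS O O0 oO; have [x [Ox Sx]] := dS O O0 oO.
by exists x; split => //; apply: SS'.
Qed.

Lemma dense_nbhs S W (x : T) : dense S -> nbhs x W -> W `&` S !=set0.
Proof.
move=> dS xW.
have [y [/interior_subset Wy Sy]] := dS _ (ex_intro _ x xW) (@open_interior _ W).
by exists y.
Qed.

End dense.

Lemma dense_image (T U : topologicalType) (g : T -> U) (s : U -> T) (S : set T) :
  continuous g -> cancel s g -> dense S -> dense (g @` S).
Proof.
move=> cg gK dS O [u Ou] oO.
have [t [Ot St]] : (g @^-1` O) `&` S !=set0.
  by apply: dS; [exists (s u); rewrite /= gK | exact: (proj1 (continuousP _))].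
by exists (g t); split => //; exists t.
Qed.

Lemma continuous_prod (T : topologicalType) (I : Type) (K : I -> topologicalType)
    (h : T -> prod_topology K) :
  (forall i, continuous (fun t => h t i)) -> continuous h.
Proof.
move=> hc t; apply/cvg_sup => i.
exact: (@continuous_comp_initial _ _ _ (fun q : prod_topology K => q i) _ (hc i)).
Qed.

Lemma nbhs_prod_box (I : eqType) (K : I -> topologicalType) (p : prod_topology K)
    (O : set (prod_topology K)) : nbhs p O ->
  exists2 V : forall i, set (K i), (forall i, nbhs (p i) (V i)) &
    [set q : prod_topology K | forall i, V i (q i)] `<=` O.
Proof.
pose F : set_system (prod_topology K) := [set A | exists2 V : forall i, set (K i),
   (forall i, nbhs (p i) (V i)) & [set q : prod_topology K | forall i, V i (q i)] `<=` A].
have FF : Filter F.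
  split.
  - by exists (fun=> setT) => // i; apply: filterT.
  - move=> A B [V hV VA] [W hW WB]; exists (fun i => V i `&` W i).
      by move=> i; apply: filterI.
    by move=> q VWq; split; [apply: VA => i; case: (VWq i)|apply: WB => i; case: (VWq i)].
  - by move=> A B AB [V hV VA]; exists V => // q /VA /AB.
suff : F --> p by move=> /(_ O) h /h.
apply/cvg_sup => i A /= [_ [[B oB <-] Bp BA]].
exists (dfwith (fun j => @setT (K j)) i B).
  by move=> j; case: dfwithP => [|k _]; [apply: open_nbhs_nbhs|apply: filterT].
by move=> q /(_ i); rewrite dfwithin => /BA.
Qed.

Lemma box_nbhs_prod (I : finType) (K : I -> topologicalType) (p : prod_topology K)
    (V : forall i, set (K i)) : (forall i, nbhs (p i) (V i)) ->
  nbhs p [set q : prod_topology K | forall i, V i (q i)].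
Proof.
move=> hV; apply: (filter_forall (nbhs_filter p)) => i.
exact: (@proj_continuous I K i p _ (hV i)).
Qed.

Lemma iter_semiconj (T U : Type) (g : T -> T) (h : U -> U) (p : T -> U) :
  {morph p : t / g t >-> h t} -> forall j, {morph p : t / iter j g t >-> iter j h t}.
Proof. by move=> pg; elim=> [//|j IH] t /=; rewrite pg IH. Qed.

Lemma tri_mixing_factor (T U : topologicalType) (g : T -> T) (h : U -> U)
    (p : T -> U) (s : U -> T) :
  continuous p -> cancel s p -> {morph p : t / g t >-> h t} ->
  tri_mixing g -> tri_mixing h.
Proof.
move=> cp pK pg mix_g m m0 B Binf; have [Y [dY orbit_dense]] := mix_g m m0 B Binf.
exists (p @` Y); split; first exact: dense_image dY.
move=> _ [t Yt <-].
pose pm (q : {ptws 'I_m -> T}) : {ptws 'I_m -> U} := fun i => p (q i).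
apply: (@denseS _ (pm @` [set (fun i : 'I_m => iter (i.+1 * k)%N g t) | k in B])).
  move=> _ [_ [k Bk <-] <-]; exists k => //.
  by apply: funext => i; rewrite /pm (iter_semiconj pg).
apply: (@dense_image _ _ pm (fun u i => s (u i))) (orbit_dense t Yt).
  apply: continuous_prod => i q.
  exact: (continuous_comp (@proj_continuous _ (fun=> T) i q) (cp (q i))).
by move=> u; apply: funext => i; rewrite /pm pK.
Qed.

Lemma ball_seq_subset (R : realDomainType) (M : pseudoMetricType R) (s : seq M)
    (U : set M) : (forall c, c \in s -> nbhs c U) ->
  exists2 e : R, 0 < e & forall c, c \in s -> ball c e `<=` U.
Proof.
elim: s => [|x s IH] sU; first by exists 1 => // c; rewrite in_nil.
have [e2 e2_gt0 e2U] := IH (fun c cs => sU c (@mem_behead _ (x :: s) c cs)).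
have /nbhs_ballP [e1 e1_gt0 e1U] : nbhs x U by apply: sU; rewrite mem_head.
exists (Num.min e1 e2); first by rewrite lt_min e1_gt0 e2_gt0.
move=> c; rewrite in_cons => /orP [/eqP ->|cs].
  by apply: subset_trans e1U; apply: le_ball; rewrite ge_min lexx.
by apply: subset_trans (e2U _ cs); apply: le_ball; rewrite ge_min lexx orbT.
Qed.

Section hyperspace.
Context {R : realType} (X : metricType R) (n : nat).
Implicit Types (A C D : Fn X n) (U : set X).

Definition Fn_sub U : set (Fn X n) := [set D | forall d, d \in fn_set D -> U d].

Lemma nbhs_Fn_sub U C : (forall c, c \in fn_set C -> nbhs c U) -> nbhs C (Fn_sub U).
Proof.
move=> CU; have [e e_gt0 eU] := ball_seq_subset CU.
apply/nbhs_ballP; exists e => // D [_ DC] d dD.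
by have [c cC cd] := DC d dD; apply: (eU c cC); rewrite ballEmdist.
Qed.

Lemma Fn_set0Pn A : exists a, a \in fn_set A.
Proof. by case: A => A /= /andP[]; rewrite cardfs_gt0 => /fset0Pn. Qed.

Lemma iter_Fn_map_mem (f : X -> X) A a j : a \in fn_set A ->
  iter j f a \in fn_set (iter j (Fn_map n f) A).
Proof. by move=> aA; elim: j => [//|j IH] /=; apply/imfsetP; exists (iter j f a). Qed.

Lemma card_Fn_map1 (f : X -> X) C :
  #|` fn_set C| = 1%N -> #|` fn_set (Fn_map n f C)| = 1%N.
Proof.
move=> C1; apply/anti_leq; rewrite -{1}C1 leq_imfset_card.
by case/andP: (fn_setP (Fn_map n f C)).
Qed.

Hypothesis n_gt0 : (0 < n)%N.

Lemma fnP1 (x : X) : fnP n [fset x]%fset.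
Proof. by rewrite /fnP cardfs1 n_gt0. Qed.

Definition Fn1 (x : X) : Fn X n := MkFn (fnP1 x).

Lemma nbhs_Fn1_sub x U : nbhs x U -> nbhs (Fn1 x) (Fn_sub U).
Proof. by move=> xU; apply: nbhs_Fn_sub => c; rewrite inE => /eqP ->. Qed.

Lemma dense_bigcup_Fn (Y : set (Fn X n)) :
  dense Y -> dense (\bigcup_(A in Y) [set` fn_set A]).
Proof.
move=> dY O [x Ox] oO.
have [D [DO YD]] := dense_nbhs dY (nbhs_Fn1_sub (open_nbhs_nbhs (conj oO Ox))).
have [d dD] := Fn_set0Pn D.
by exists d; split; [exact: DO | exists D].
Qed.

Lemma dense_selection (I : finType) (S : set {ptws I -> Fn X n})
    (P : set {ptws I -> X}) : dense S ->
  (forall Q, S Q -> exists2 q, P q & forall i, q i \in fn_set (Q i)) -> dense P.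
Proof.
move=> dS selP O [p Op] oO.
have [V pV VO] := nbhs_prod_box (open_nbhs_nbhs (conj oO Op)).
have W_nbhs : nbhs ((fun i => Fn1 (p i)) : {ptws I -> Fn X n})
    [set Q : {ptws I -> Fn X n} | forall i, Fn_sub (V i) (Q i)].
  exact: (@box_nbhs_prod I (fun=> Fn X n) _ (fun i => Fn_sub (V i))
           (fun i => nbhs_Fn1_sub (pV i))).
have [Q [QV SQ]] := dense_nbhs dS W_nbhs.
have [q Pq qQ] := selP Q SQ.
by exists q; split => //; apply: VO => i; exact: QV.
Qed.

Lemma tri_mixing_of_Fn_map (f : X -> X) : tri_mixing (Fn_map n f) -> tri_mixing f.
Proof.
move=> mixF m m0 B Binf; have [Y [dY orbit_dense]] := mixF m m0 B Binf.
exists (\bigcup_(A in Y) [set` fn_set A]); split; first exact: dense_bigcup_Fn.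
move=> a [A YA aA]; apply: dense_selection (orbit_dense A YA) _.
move=> _ [k Bk <-]; exists (fun i : 'I_m => iter (i.+1 * k)%N f a); first by exists k.
by move=> i; exact: iter_Fn_map_mem.
Qed.

End hyperspace.

Local Open Scope quotient_scope.

Lemma SF_map_pi (R : realType) (X : metricType R) (n : nat) (f : X -> X) :
  {morph \pi_(SF X n) : A / Fn_map n f A >-> SF_map n f A}.
Proof.
move=> A; rewrite /SF_map.
have /eqmodP : \pi_(SF X n) (repr (\pi_(SF X n) A)) = \pi_(SF X n) A by rewrite reprK.
case/orP=> [/eqP -> //|/andP[/eqP rA1 /eqP A1]]; apply/eqmodP.
by rewrite /= /sfrel !card_Fn_map1 // orbT.
Qed.

Unset Implicit Arguments.

Theorem theorem11 (R : realType) (X : metricType R) (n : nat) (f : X -> X) :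
  continuum X -> (2 <= n)%N -> continuous f ->
  tri_mixing (Fn_map n f) ->
  tri_mixing f /\ tri_mixing (SF_map n f).
Proof.
move=> _ n_ge2 _ mixF; have n_gt0 : (0 < n)%N by exact: ltnW.
split; first exact: (tri_mixing_of_Fn_map n_gt0 mixF).
exact: tri_mixing_factor (@pi_continuous _ _) (@reprK _ _) (SF_map_pi f) mixF.
Qed.
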